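(* In the one-dimensional perturbed elephant random walk with stops, suppose $\epsilon+r\neq1$ and $\gamma=\frac{1-\epsilon}{2}$. Then for all $t\ge1$ $$\mathbb{E}[X_t^2]=\frac{t}{\epsilon+r}-\frac{1}{(\epsilon+r)\Gamma(1-\epsilon-r)}\,\frac{\Gamma(t+1-\epsilon-r)}{\Gamma(t)},$$ and hence $\displaystyle\lim_{t\to\infty}\frac{\mathbb{E}[X_t^2]}{t}=\frac{1}{\epsilon+r}$.
   Context: One-dimensional perturbed elephant random walk with stops (perturbed ERWS): fix $p,q,r\in(0,1)$ with $p+q+r=1$, $\epsilon\in(0,1)$ and $s\in(0,1)$, and set $\gamma=p-q$. The steps $\sigma_1,\sigma_2,\dots$ take values in $\{-1,0,1\}$, $X_0=0$ and $X_t=\sigma_1+\dots+\sigma_t$. The first step satisfies $P(\sigma_1=1)=s$, $P(\sigma_1=-1)=1-s$. For $t\ge1$, conditionally on $\sigma_1,\dots,\sigma_t$, an index $k\in\{1,\dots,t\}$ is chosen uniformly at random. If $\sigma_k=\pm1$, then $\sigma_{t+1}=\sigma_k$ with probability $p$, $\sigma_{t+1}=-\sigma_k$ with probability $q$, and $\sigma_{t+1}=0$ with probability $r$. If $\sigma_k=0$, then $\sigma_{t+1}=1$ with probability $\epsilon/2$, $\sigma_{t+1}=-1$ with probability $\epsilon/2$, and $\sigma_{t+1}=0$ with probability $1-\epsilon$. *)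

From Stdlib Require Import Reals Lra List ZArith ClassicalEpsilon.
Import ListNotations.
Open Scope R_scope.

(* ---------- Euler's Gamma function (Gauss limit definition) ----------
   Gamma z = lim_{n->oo} n! n^z / (z (z+1) ... (z+n)),
   valid for all z not in {0,-1,-2,...}. *)
Fixpoint rising_prod (z : R) (n : nat) : R :=
  match n with
  | O => z
  | S m => rising_prod z m * (z + INR (S m))
  end.

Definition gauss_seq (z : R) (n : nat) : R :=
  INR (fact n) * Rpower (INR n) z / rising_prod z n.

Definition Gamma (z : R) : R :=
  epsilon (inhabits 0) (fun l => Un_cv (gauss_seq z) l).

(* ---------- perturbed elephant random walk with stops ----------
   Histories are lists of steps in {-1,0,1}, MOST RECENT STEP FIRST. *)

(* Probability that sigma_{t+1} = x given that the uniformly chosen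
   earlier step sigma_k equals sgm. *)
Definition kernel (p q r eps : R) (sgm x : Z) : R :=
  if Z.eqb sgm 0 then
    (if Z.eqb x 0 then 1 - eps
     else if Z.eqb x 1 then eps / 2
     else if Z.eqb x (-1) then eps / 2 else 0)
  else
    (if Z.eqb x sgm then p
     else if Z.eqb x (- sgm) then q
     else if Z.eqb x 0 then r else 0).

Definition first_step (s : R) (x : Z) : R :=
  if Z.eqb x 1 then s else if Z.eqb x (-1) then 1 - s else 0.

(* P(sigma_{t+1} = x | sigma_1..sigma_t = h), t = length h >= 1,
   k uniform in {1..t}. *)
Definition step_prob (p q r eps : R) (h : list Z) (x : Z) : R :=
  / INR (length h) * fold_right (fun k acc => kernel p q r eps k x + acc) 0 h.

Fixpoint path_prob (p q r eps s : R) (l : list Z) : R :=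
  match l with
  | [] => 1
  | [x] => first_step s x
  | x :: h => path_prob p q r eps s h * step_prob p q r eps h x
  end.

Fixpoint paths (n : nat) : list (list Z) :=
  match n with
  | O => [ [] ]
  | S m => flat_map (fun l => map (fun x => x :: l) [-1; 0; 1]%Z) (paths m)
  end.

Definition position (l : list Z) : Z := fold_right Z.add 0%Z l.

Definition second_moment (p q r eps s : R) (t : nat) : R :=
  fold_right (fun l acc => path_prob p q r eps s l * (IZR (position l)) ^ 2 + acc)
             0 (paths t).

(* Conditioning on the last step shows that E[X_t^2] and E[N_t], where N_t = [moves] counts
   the non-zero steps, satisfy an affine recursion (the total mass being 1).  When
   2 (p - q) = 1 - eps it is solved by E[X_t^2] = (t - rho_(t-1)) / (eps + r), where
   rho_j = [rising_ratio a j] = a (a+1) ... (a+j) / j! and a = 1 - eps - r.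
   For z > 0 the Gauss sequence of Gamma is increasing and bounded, and the relation between
   the sequences at z and z + 1 transports convergence to (-1, 0); this yields
   Gamma (z + n + 1) = z (z+1) ... (z+n) Gamma z, turning rho_j into the Gamma quotient.
   Finally rho_j / (j+1) = j^a / ((j+1) gauss_seq a j) tends to 0 because a < 1. *)

From Stdlib Require Import Reals Lra Lia List ZArith ClassicalEpsilon.
From Coquelicot Require Import Coquelicot.
Import ListNotations.
Open Scope R_scope.

Definition lsum {A : Type} (g : A -> R) (l : list A) : R :=
  fold_right (fun x acc => g x + acc) 0 l.

Lemma lsum_cons {A} (g : A -> R) x l : lsum g (x :: l) = g x + lsum g l.
Proof. reflexivity. Qed.

Lemma lsum_app {A} (g : A -> R) l1 l2 : lsum g (l1 ++ l2) = lsum g l1 + lsum g l2.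
Proof. induction l1 as [|x l1 IH]; unfold lsum in *; simpl; [ring|rewrite IH; ring]. Qed.

Lemma lsum_flat_map {A B} (g : B -> R) (F : A -> list B) l :
  lsum g (flat_map F l) = lsum (fun a => lsum g (F a)) l.
Proof. induction l as [|a l IH]; simpl; [reflexivity|]. rewrite lsum_app, IH. reflexivity. Qed.

Lemma lsum_map {A B} (g : B -> R) (F : A -> B) l : lsum g (map F l) = lsum (fun a => g (F a)) l.
Proof.
  induction l as [|a l IH]; unfold lsum in *; simpl; [reflexivity|rewrite IH; reflexivity].
Qed.

Lemma lsum_ext_in {A} (g1 g2 : A -> R) l :
  (forall x, In x l -> g1 x = g2 x) -> lsum g1 l = lsum g2 l.
Proof.
  induction l as [|a l IH]; intros H; unfold lsum in *; simpl; [reflexivity|].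
  rewrite H, IH; [reflexivity| |now left]. intros y Hy. apply H. now right.
Qed.

Lemma lsum_scal_l {A} (c : R) (g : A -> R) l : lsum (fun x => c * g x) l = c * lsum g l.
Proof. induction l as [|a l IH]; unfold lsum in *; simpl; [ring|rewrite IH; ring]. Qed.

Lemma lsum_scal_r {A} (c : R) (g : A -> R) l : lsum (fun x => g x * c) l = lsum g l * c.
Proof. induction l as [|a l IH]; unfold lsum in *; simpl; [ring|rewrite IH; ring]. Qed.

Lemma lsum_comm {A B} (F : A -> B -> R) (l1 : list A) (l2 : list B) :
  lsum (fun a => lsum (F a) l2) l1 = lsum (fun b => lsum (fun a => F a b) l1) l2.
Proof.
  induction l1 as [|a l1 IH]; unfold lsum in *; simpl.
  - induction l2 as [|b l2 IH2]; simpl; [reflexivity|rewrite <- IH2; ring].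
  - rewrite IH. clear IH. induction l2 as [|b l2 IH2]; simpl; [ring|rewrite <- IH2; ring].
Qed.

Definition rising_ratio (a : R) (j : nat) : R := rising_prod a j / INR (fact j).

Lemma rising_ratio_succ a j :
  rising_ratio a (S j) = rising_ratio a j * (a + INR (S j)) / INR (S j).
Proof.
  unfold rising_ratio. cbn [rising_prod]. rewrite fact_simpl, mult_INR.
  pose proof (INR_fact_neq_0 j). assert (INR (S j) <> 0) by (apply not_0_INR; lia).
  field. auto.
Qed.

Section Walk.

Variables p q r eps s : R.
Hypothesis hpqr : p + q + r = 1.

Definition steps : list Z := [-1; 0; 1]%Z.

Lemma paths_spec t h : In h (paths t) -> length h = t /\ incl h steps.
Proof.
  revert h; induction t as [|t IH]; intros h Hin; cbn [paths] in Hin.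
  - destruct Hin as [<-|[]]. split; [reflexivity|intros x []].
  - apply in_flat_map in Hin as [l [Hl Hx]]. apply in_map_iff in Hx as [x [<- Hx]].
    destruct (IH l Hl) as [Hlen Hincl]. split; [simpl; congruence|]. apply incl_cons; assumption.
Qed.

Definition expect (t : nat) (f : list Z -> R) : R :=
  lsum (fun l => path_prob p q r eps s l * f l) (paths t).

Lemma expect_ext t f g : (forall h, In h (paths t) -> f h = g h) -> expect t f = expect t g.
Proof. intros H. apply lsum_ext_in. intros h Hh. rewrite H; auto. Qed.

Lemma expect_linear t f g a b c :
  expect t (fun h => a * f h + b * g h + c) =
  a * expect t f + b * expect t g + c * expect t (fun _ => 1).
Proof.
  unfold expect. induction (paths t) as [|l L IH]; unfold lsum in *; simpl; [ring|].
  rewrite IH. ring.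
Qed.

Lemma expect_succ t f : (1 <= t)%nat ->
  expect (S t) f = expect t (fun h => lsum (fun x => step_prob p q r eps h x * f (x :: h)) steps).
Proof.
  intros Ht. unfold expect. cbn [paths]. rewrite lsum_flat_map. apply lsum_ext_in.
  intros h Hin. destruct (paths_spec t h Hin) as [Hl _].
  rewrite lsum_map, <- lsum_scal_l. apply lsum_ext_in. intros x _.
  destruct h as [|k h]; [simpl in Hl; lia|].
  change (path_prob p q r eps s (x :: k :: h))
    with (path_prob p q r eps s (k :: h) * step_prob p q r eps (k :: h) x).
  ring.
Qed.

Definition moves (h : list Z) : R := lsum (fun k => IZR k ^ 2) h.

Definition position_sq (h : list Z) : R := IZR (position h) ^ 2.

Lemma lsum_quadratic (a b c : R) h :
  lsum (fun k => a + b * IZR k + c * IZR k ^ 2) h =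
  a * INR (length h) + b * IZR (position h) + c * moves h.
Proof.
  unfold moves. induction h as [|k h IH]; [unfold lsum; simpl; ring|].
  rewrite !lsum_cons, IH. simpl length. simpl position. rewrite S_INR, plus_IZR. ring.
Qed.

Lemma kernel_moments k A B C : In k steps ->
  lsum (fun x => kernel p q r eps k x * (A + B * IZR x + C * IZR x ^ 2)) steps =
  (A + C * eps) + B * (p - q) * IZR k + C * (1 - r - eps) * IZR k ^ 2.
Proof.
  intros [<-|[<-|[<-|[]]]]; unfold lsum, steps, kernel; cbn -[IZR];
    replace r with (1 - p - q) by lra; field.
Qed.

Lemma step_prob_moments h A B C : incl h steps -> h <> [] ->
  lsum (fun x => step_prob p q r eps h x * (A + B * IZR x + C * IZR x ^ 2)) steps =
  A + (B * (p - q) * IZR (position h)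
       + C * ((1 - r - eps) * moves h + eps * INR (length h))) / INR (length h).
Proof.
  intros Hincl Hne.
  assert (Hn : INR (length h) <> 0) by (destruct h; [easy|apply not_0_INR; simpl; lia]).
  transitivity (/ INR (length h) *
    lsum (fun k => lsum (fun x => kernel p q r eps k x * (A + B * IZR x + C * IZR x ^ 2)) steps) h).
  - rewrite lsum_comm, <- lsum_scal_l. apply lsum_ext_in. intros x _.
    unfold step_prob. change (fold_right _ 0 h) with (lsum (fun k => kernel p q r eps k x) h).
    rewrite lsum_scal_r. ring.
  - rewrite (lsum_ext_in _ _ h (fun k Hk => kernel_moments k A B C (Hincl k Hk))).
    rewrite lsum_quadratic. field. exact Hn.
Qed.

Lemma expect_succ_quadratic t f A B C : (1 <= t)%nat ->
  (forall x h, f (x :: h) = A h + B h * IZR x + C * IZR x ^ 2) ->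
  expect (S t) f =
  expect t (fun h => A h + (B h * (p - q) * IZR (position h)
                            + C * ((1 - r - eps) * moves h + eps * INR t)) / INR t).
Proof.
  intros Ht Hf. rewrite expect_succ by exact Ht. apply expect_ext. intros h Hin.
  destruct (paths_spec t h Hin) as [<- Hincl].
  rewrite (lsum_ext_in _ (fun x => step_prob p q r eps h x * (A h + B h * IZR x + C * IZR x ^ 2)))
    by (intros; rewrite Hf; reflexivity).
  apply step_prob_moments; [exact Hincl|]. intros ->. simpl in Ht. lia.
Qed.

Lemma expect_one t : (1 <= t)%nat -> expect t (fun _ => 1) = 1.
Proof.
  induction 1 as [|t Ht IH].
  - unfold expect, lsum, first_step. cbn -[IZR]. lra.
  - rewrite (expect_succ_quadratic t _ (fun _ => 1) (fun _ => 0) 0) by (auto || (intros; ring)).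
    transitivity (expect t (fun _ => 1)); [|exact IH].
    apply expect_ext. intros. field. apply not_0_INR. lia.
Qed.

Lemma expect_moves_succ t : (1 <= t)%nat ->
  expect (S t) moves = (1 + (1 - r - eps) / INR t) * expect t moves + eps.
Proof.
  intros Ht. assert (Hn : INR t <> 0) by (apply not_0_INR; lia).
  rewrite (expect_succ_quadratic t _ moves (fun _ => 0) 1)
    by (auto || (intros; unfold moves, lsum; simpl; ring)).
  transitivity (expect t (fun h => (1 + (1 - r - eps) / INR t) * moves h + 0 * moves h + eps)).
  - apply expect_ext. intros. field. exact Hn.
  - rewrite expect_linear, expect_one by exact Ht. ring.
Qed.

Lemma expect_position_sq_succ t : (1 <= t)%nat ->
  expect (S t) position_sq =
  (1 + 2 * (p - q) / INR t) * expect t position_sq + (1 - r - eps) / INR t * expect t moves + eps.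
Proof.
  intros Ht. assert (Hn : INR t <> 0) by (apply not_0_INR; lia).
  rewrite (expect_succ_quadratic t _ position_sq (fun h => 2 * IZR (position h)) 1) by
    (auto || (intros; unfold position_sq; simpl position; rewrite plus_IZR; ring)).
  transitivity (expect t (fun h => (1 + 2 * (p - q) / INR t) * position_sq h
                                   + (1 - r - eps) / INR t * moves h + eps)).
  - apply expect_ext. intros. unfold position_sq. field. exact Hn.
  - rewrite expect_linear, expect_one by exact Ht. ring.
Qed.

Lemma expect_closed_form (hg : p - q = (1 - eps) / 2)
  (hu : eps + r <> 0) (ha : 1 - eps - r <> 0) j :
  expect (S j) moves
    = (eps * INR (S j) + r * rising_ratio (1 - eps - r) j / (1 - eps - r)) / (eps + r)
  /\ expect (S j) position_sq = (INR (S j) - rising_ratio (1 - eps - r) j) / (eps + r).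
Proof.
  induction j as [|j [Hm Hx]].
  - unfold rising_ratio. simpl rising_prod. simpl INR.
    unfold expect, moves, position_sq, lsum, first_step. cbn -[IZR]. split; field; lra.
  - assert (HS : INR (S j) <> 0) by (apply not_0_INR; lia).
    rewrite expect_moves_succ, expect_position_sq_succ, Hm, Hx, hg, rising_ratio_succ by lia.
    rewrite (S_INR (S j)). split; field; lra.
Qed.

End Walk.

Lemma exp_le x y : x <= y -> exp x <= exp y.
Proof. intros [H| ->]; [left; apply exp_increasing; exact H|right; reflexivity]. Qed.

Lemma ln_sub_bounds x y : 0 < x -> 0 < y -> (y - x) / y <= ln y - ln x <= (y - x) / x.
Proof.
  intros Hx Hy.
  assert (Hln : forall u v, 0 < u -> 0 < v -> ln v - ln u <= v / u - 1).
  { intros u v Hu Hv. pose proof (exp_ineq1_le (ln (v / u))) as H.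
    rewrite exp_ln in H by (apply Rdiv_lt_0_compat; auto).
    unfold Rdiv in H |- *.
    rewrite ln_mult, ln_Rinv in H by (auto; apply Rinv_0_lt_compat; auto). lra. }
  pose proof (Hln x y Hx Hy). pose proof (Hln y x Hy Hx).
  split; [replace ((y - x) / y) with (1 - x / y) by (field; lra)|
          replace ((y - x) / x) with (y / x - 1) by (field; lra)]; lra.
Qed.

Lemma is_lim_seq_one_plus_div c : is_lim_seq (fun n => 1 + c / INR n) 1.
Proof.
  replace (Finite 1) with (Finite (1 + c * 0)) by (f_equal; ring).
  apply is_lim_seq_plus'; [apply is_lim_seq_const|].
  apply (is_lim_seq_scal_l (fun n => / INR n) c 0).
  replace (Finite 0) with (Rbar_inv p_infty) by reflexivity.
  apply is_lim_seq_inv; [apply is_lim_seq_INR|discriminate].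
Qed.

Lemma is_lim_seq_INR_Rpower_neg c : c < 0 -> is_lim_seq (fun n => Rpower (INR n) c) 0.
Proof.
  intros Hc. unfold Rpower.
  apply (is_lim_comp_seq (fun y => exp (c * ln y)) INR p_infty 0).
  - eapply is_lim_comp; [apply is_lim_exp_m| |].
    + replace m_infty with (Rbar_mult c p_infty).
      * apply is_lim_scal_l, is_lim_ln_p.
      * simpl. destruct (Rle_dec 0 c); [exfalso; lra|reflexivity].
    + exists 0. easy.
  - exists 0%nat. easy.
  - apply is_lim_seq_INR.
Qed.

Lemma Gamma_of_lim z (L : R) : is_lim_seq (gauss_seq z) L -> Gamma z = L.
Proof.
  intros H. apply is_lim_seq_Reals in H. unfold Gamma.
  apply (UL_sequence (gauss_seq z)); [|exact H].
  apply epsilon_spec. exists L. exact H.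
Qed.

Lemma rising_prod_pos z n : 0 < z -> 0 < rising_prod z n.
Proof.
  intros Hz. induction n as [|n IH]; cbn [rising_prod]; [exact Hz|].
  apply Rmult_lt_0_compat; [exact IH|]. pose proof (pos_INR (S n)). lra.
Qed.

Lemma rising_prod_neq0 z n : -1 < z -> z <> 0 -> rising_prod z n <> 0.
Proof.
  intros Hz1 Hz. induction n as [|n IH]; cbn [rising_prod]; [exact Hz|].
  apply Rmult_integral_contrapositive. split; [exact IH|].
  rewrite S_INR. pose proof (pos_INR n). lra.
Qed.

Lemma rising_prod_succ_arg z n : rising_prod (z + 1) n * z = rising_prod z n * (z + 1 + INR n).
Proof.
  induction n as [|n IH]; cbn [rising_prod]; [simpl; ring|].
  transitivity (rising_prod (z + 1) n * z * (z + 1 + INR (S n))); [ring|].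
  rewrite IH, S_INR. ring.
Qed.

Lemma gauss_seq_succ_arg z n : -1 < z -> z <> 0 -> (1 <= n)%nat ->
  gauss_seq (z + 1) n * (1 + (z + 1) / INR n) = z * gauss_seq z n.
Proof.
  intros Hz1 Hz Hn. unfold gauss_seq.
  assert (HN : 0 < INR n) by (apply lt_0_INR; lia).
  pose proof (rising_prod_neq0 z n Hz1 Hz).
  pose proof (rising_prod_neq0 (z + 1) n ltac:(lra) ltac:(lra)).
  pose proof (rising_prod_succ_arg z n) as Hshift.
  rewrite Rpower_plus, Rpower_1 by exact HN.
  replace (1 + (z + 1) / INR n) with (rising_prod (z + 1) n * z / (rising_prod z n * INR n)).
  - field. repeat split; auto; lra.
  - rewrite Hshift. field. split; [lra|auto].
Qed.

Lemma is_lim_seq_gauss_seq_succ z (L : R) : -1 < z -> z <> 0 ->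
  is_lim_seq (gauss_seq z) L <-> is_lim_seq (gauss_seq (z + 1)) (z * L).
Proof.
  intros Hz1 Hz.
  pose proof (is_lim_seq_one_plus_div (z + 1)) as Hlim.
  split; intros H.
  - apply (is_lim_seq_ext_loc (fun n => z * gauss_seq z n / (1 + (z + 1) / INR n))).
    + exists 1%nat. intros n Hn. rewrite <- gauss_seq_succ_arg by auto.
      assert (0 < INR n) by (apply lt_0_INR; lia). field. lra.
    + replace (z * L) with (z * L / 1) by field.
      apply is_lim_seq_div'; [|exact Hlim|lra].
      apply (is_lim_seq_mult' (fun _ => z)); [apply is_lim_seq_const|exact H].
  - apply (is_lim_seq_ext_loc (fun n => gauss_seq (z + 1) n * (1 + (z + 1) / INR n) / z)).
    + exists 1%nat. intros n Hn. rewrite gauss_seq_succ_arg by auto. field. exact Hz.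
    + replace L with (z * L * 1 / z) at 1 by (field; exact Hz).
      apply is_lim_seq_div'; [|apply is_lim_seq_const|exact Hz].
      apply is_lim_seq_mult'; [exact H|exact Hlim].
Qed.

Lemma gauss_seq_pos z n : 0 < z -> 0 < gauss_seq z n.
Proof.
  intros Hz. unfold gauss_seq, Rpower. apply Rdiv_lt_0_compat; [|apply rising_prod_pos, Hz].
  apply Rmult_lt_0_compat; [apply INR_fact_lt_0|apply exp_pos].
Qed.

Lemma gauss_seq_succ z n : 0 < z -> (1 <= n)%nat ->
  gauss_seq z (S n) = gauss_seq z n *
    exp (z * (ln (INR n + 1) - ln (INR n)) - (ln (INR n + 1 + z) - ln (INR n + 1))).
Proof.
  intros Hz Hn. assert (HN : 0 < INR n) by (apply lt_0_INR; lia).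
  assert (Hratio : exp (- (ln (INR n + 1 + z) - ln (INR n + 1))) = (INR n + 1) / (INR n + 1 + z)).
  { rewrite exp_Ropp. unfold Rminus. rewrite exp_plus, exp_Ropp, !exp_ln by lra. field. lra. }
  set (A := z * (ln (INR n + 1) - ln (INR n))).
  replace (A - _) with (A + - (ln (INR n + 1 + z) - ln (INR n + 1))) by ring.
  rewrite exp_plus, Hratio. unfold A, gauss_seq, Rpower. cbn [rising_prod].
  rewrite fact_simpl, mult_INR, !S_INR.
  replace (z * ln (INR n + 1)) with (z * ln (INR n) + z * (ln (INR n + 1) - ln (INR n))) by ring.
  rewrite exp_plus. pose proof (rising_prod_pos z n Hz). pose proof (exp_pos (z * ln (INR n))).
  field. repeat split; lra.
Qed.

(* The exponent above lies in [[0, z (1 + z) (1/n - 1/(n+1))]]: the first bound makes the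
   Gauss sequence increasing, the second bounds it by a telescoping product. *)
Lemma gauss_seq_exponent_bounds z n : 0 < z -> (1 <= n)%nat ->
  let D := z * (ln (INR n + 1) - ln (INR n)) - (ln (INR n + 1 + z) - ln (INR n + 1)) in
  0 <= D /\ D <= z * (1 + z) / INR n - z * (1 + z) / INR (S n).
Proof.
  intros Hz Hn D. assert (HN : 0 < INR n) by (apply lt_0_INR; lia). rewrite S_INR.
  destruct (ln_sub_bounds (INR n) (INR n + 1)) as [L1 U1]; [lra|lra|].
  destruct (ln_sub_bounds (INR n + 1) (INR n + 1 + z)) as [L2 U2]; [lra|lra|].
  replace (INR n + 1 - INR n) with 1 in L1, U1 by ring.
  replace (INR n + 1 + z - (INR n + 1)) with z in L2, U2 by ring.
  split; unfold D.
  - apply Rmult_le_compat_l with (r := z) in L1; lra.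
  - apply Rmult_le_compat_l with (r := z) in U1; [|lra].
    assert (Hkey : z * (1 / INR n) - z / (INR n + 1 + z)
                   <= z * (1 + z) / INR n - z * (1 + z) / (INR n + 1)).
    { replace (z * (1 / INR n) - z / (INR n + 1 + z))
        with (z * (1 + z) / (INR n * (INR n + 1 + z))) by (field; lra).
      replace (z * (1 + z) / INR n - z * (1 + z) / (INR n + 1))
        with (z * (1 + z) / (INR n * (INR n + 1))) by (field; lra).
      unfold Rdiv. apply Rmult_le_compat_l; [nra|].
      apply Rinv_le_contravar; nra. }
    lra.
Qed.

Lemma gauss_seq_incr z n : 0 < z -> (1 <= n)%nat -> gauss_seq z n <= gauss_seq z (S n).
Proof.
  intros Hz Hn. rewrite gauss_seq_succ by auto.
  destruct (gauss_seq_exponent_bounds z n Hz Hn) as [HD _].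
  pose proof (exp_le _ _ HD) as He. rewrite exp_0 in He.
  pose proof (gauss_seq_pos z n Hz). nra.
Qed.

Lemma gauss_seq_le z n : 0 < z -> (1 <= n)%nat ->
  gauss_seq z n <= gauss_seq z 1 * exp (z * (1 + z)).
Proof.
  intros Hz Hn. set (c := z * (1 + z)).
  assert (Henv : forall k, (1 <= k)%nat ->
                 gauss_seq z k * exp (c / INR k) <= gauss_seq z 1 * exp c).
  { induction 1 as [|k Hk IH]; [simpl; rewrite Rdiv_1_r; lra|].
    eapply Rle_trans; [|exact IH].
    rewrite gauss_seq_succ, Rmult_assoc, <- exp_plus by auto.
    destruct (gauss_seq_exponent_bounds z k Hz Hk) as [_ HD].
    apply Rmult_le_compat_l; [apply Rlt_le, gauss_seq_pos, Hz|]. apply exp_le. fold c in HD. lra. }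
  eapply Rle_trans; [|exact (Henv n Hn)].
  assert (0 <= c / INR n) by (apply Rlt_le, Rdiv_lt_0_compat; [unfold c; nra|apply lt_0_INR; lia]).
  pose proof (exp_ineq1_le (c / INR n)). pose proof (gauss_seq_pos z n Hz). nra.
Qed.

Lemma gauss_seq_cv_pos z : 0 < z -> exists L : R, is_lim_seq (gauss_seq z) L /\ 0 < L.
Proof.
  intros Hz.
  assert (Hgrow : Un_growing (fun k => gauss_seq z (S k)))
    by (intros k; apply gauss_seq_incr; lia || auto).
  assert (Hub : has_ub (fun k => gauss_seq z (S k))).
  { exists (gauss_seq z 1 * exp (z * (1 + z))). intros x [k ->]. apply gauss_seq_le; lia || auto. }
  destruct (growing_cv _ Hgrow Hub) as [L HL]. exists L. split.
  - apply is_lim_seq_incr_1, is_lim_seq_Reals, HL.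
  - pose proof (growing_ineq _ _ Hgrow HL 0). pose proof (gauss_seq_pos z 1 Hz). simpl in *. lra.
Qed.

Lemma gauss_seq_cv z : -1 < z -> z <> 0 -> exists L : R, is_lim_seq (gauss_seq z) L /\ L <> 0.
Proof.
  intros Hz1 Hz. destruct (Rlt_dec 0 z) as [Hpos|Hneg].
  - destruct (gauss_seq_cv_pos z Hpos) as [L [HL HL0]]. exists L. split; [exact HL|lra].
  - destruct (gauss_seq_cv_pos (z + 1)) as [L [HL HL0]]; [lra|].
    exists (L / z). split.
    + apply (is_lim_seq_gauss_seq_succ z); auto.
      replace (z * (L / z)) with L by (field; exact Hz). exact HL.
    + unfold Rdiv. apply Rmult_integral_contrapositive. split; [lra|apply Rinv_neq_0_compat, Hz].
Qed.

Lemma Gamma_succ z : -1 < z -> z <> 0 -> Gamma (z + 1) = z * Gamma z.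
Proof.
  intros Hz1 Hz. destruct (gauss_seq_cv z Hz1 Hz) as [L [HL _]].
  rewrite (Gamma_of_lim z L HL). apply Gamma_of_lim, (is_lim_seq_gauss_seq_succ z L Hz1 Hz), HL.
Qed.

Lemma Gamma_neq0 z : -1 < z -> z <> 0 -> Gamma z <> 0.
Proof.
  intros Hz1 Hz. destruct (gauss_seq_cv z Hz1 Hz) as [L [HL HL0]].
  rewrite (Gamma_of_lim z L HL). exact HL0.
Qed.

Lemma Gamma_add_nat z n : -1 < z -> z <> 0 -> Gamma (z + INR (S n)) = rising_prod z n * Gamma z.
Proof.
  intros Hz1 Hz. induction n as [|n IH].
  - simpl INR. apply Gamma_succ; auto.
  - assert (Hn : 1 <= INR (S n)) by (apply (le_INR 1); lia).
    replace (z + INR (S (S n))) with (z + INR (S n) + 1) by (rewrite (S_INR (S n)); ring).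
    rewrite Gamma_succ, IH by lra. cbn [rising_prod]. ring.
Qed.

Lemma rising_prod_one n : rising_prod 1 n = INR (fact (S n)).
Proof.
  induction n as [|n IH]; [simpl; ring|].
  cbn [rising_prod]. rewrite IH, (fact_simpl (S n)), mult_INR, (S_INR (S n)). ring.
Qed.

Lemma Gamma_1 : Gamma 1 = 1.
Proof.
  apply Gamma_of_lim.
  apply (is_lim_seq_ext_loc (fun n => 1 / (1 + 1 / INR n))).
  - exists 1%nat. intros n Hn. unfold gauss_seq.
    rewrite rising_prod_one, Rpower_1, fact_simpl, mult_INR, S_INR by (apply lt_0_INR; lia).
    assert (0 < INR n) by (apply lt_0_INR; lia). pose proof (INR_fact_neq_0 n). field. lra.
  - replace (Finite 1) with (Finite (1 / 1)) by (f_equal; field).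
    apply is_lim_seq_div'; [apply is_lim_seq_const|apply is_lim_seq_one_plus_div|lra].
Qed.

Lemma Gamma_nat n : Gamma (INR (S n)) = INR (fact n).
Proof.
  destruct n as [|n]; [exact Gamma_1|].
  rewrite (S_INR (S n)), Rplus_comm, Gamma_add_nat, Gamma_1, rising_prod_one by lra. ring.
Qed.

Lemma is_lim_seq_Rpower_div_succ a : a < 1 -> is_lim_seq (fun n => Rpower (INR n) a / INR (S n)) 0.
Proof.
  intros Ha. apply (is_lim_seq_le_le_loc (fun _ => 0) _ (fun n => Rpower (INR n) (a - 1))).
  - exists 1%nat. intros n Hn. assert (HN : 0 < INR n) by (apply lt_0_INR; lia).
    pose proof (exp_pos (a * ln (INR n))). rewrite S_INR. split.
    + apply Rlt_le, Rdiv_lt_0_compat; [exact H|lra].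
    + replace (Rpower (INR n) a) with (Rpower (INR n) (a - 1) * INR n)
        by (rewrite <- (Rpower_1 (INR n)) at 2 by exact HN; rewrite <- Rpower_plus; f_equal; ring).
      unfold Rdiv. rewrite Rmult_assoc. rewrite <- (Rmult_1_r (Rpower (INR n) (a - 1))) at 2.
      apply Rmult_le_compat_l; [apply Rlt_le, exp_pos|].
      apply (Rmult_le_reg_r (INR n + 1)); [lra|]. rewrite Rmult_assoc, Rinv_l by lra. lra.
  - apply is_lim_seq_const.
  - apply is_lim_seq_INR_Rpower_neg. lra.
Qed.

Lemma is_lim_seq_rising_ratio_div_succ a : -1 < a < 1 -> a <> 0 ->
  is_lim_seq (fun j => rising_ratio a j / INR (S j)) 0.
Proof.
  intros Ha Ha0. destruct (gauss_seq_cv a (proj1 Ha) Ha0) as [L [HL HL0]].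
  apply (is_lim_seq_ext_loc (fun j => Rpower (INR j) a / INR (S j) / gauss_seq a j)).
  - exists 1%nat. intros j Hj. unfold gauss_seq, rising_ratio.
    pose proof (rising_prod_neq0 a j (proj1 Ha) Ha0). pose proof (INR_fact_neq_0 j).
    pose proof (exp_pos (a * ln (INR j))). unfold Rpower.
    field. repeat split; try lra; auto. apply not_0_INR. lia.
  - replace (Finite 0) with (Finite (0 / L)) by (f_equal; field; exact HL0).
    apply is_lim_seq_div'; [apply is_lim_seq_Rpower_div_succ; lra|exact HL|exact HL0].
Qed.

Theorem mainTheorem7 (p q r eps s : R)
  (hp : 0 < p < 1) (hq : 0 < q < 1) (hr : 0 < r < 1) (hpqr : p + q + r = 1)
  (heps : 0 < eps < 1) (hs : 0 < s < 1)
  (hne : eps + r <> 1) (hgamma : p - q = (1 - eps) / 2) :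
  (forall t : nat, (1 <= t)%nat ->
     second_moment p q r eps s t =
       INR t / (eps + r)
       - 1 / ((eps + r) * Gamma (1 - eps - r))
         * (Gamma (INR t + 1 - eps - r) / Gamma (INR t)))
  /\ Un_cv (fun t => second_moment p q r eps s t / INR t) (1 / (eps + r)).
Proof.
  set (a := 1 - eps - r).
  assert (Hu : eps + r <> 0) by lra.
  assert (Ha : -1 < a < 1) by (unfold a; lra).
  assert (Ha0 : a <> 0) by (unfold a; lra).
  assert (Hmoment : forall j,
            second_moment p q r eps s (S j) = (INR (S j) - rising_ratio a j) / (eps + r))
    by (intros j; exact (proj2 (expect_closed_form p q r eps s hpqr hgamma Hu Ha0 j))).
  split.
  - intros [|j] Ht; [lia|]. rewrite Hmoment.
    replace (INR (S j) + 1 - eps - r) with (a + INR (S j)) by (unfold a; ring).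
    rewrite Gamma_add_nat, Gamma_nat by lra.
    pose proof (Gamma_neq0 a (proj1 Ha) Ha0). pose proof (INR_fact_neq_0 j).
    unfold rising_ratio. field. auto.
  - apply is_lim_seq_Reals, is_lim_seq_incr_1.
    apply (is_lim_seq_ext (fun j => (1 - rising_ratio a j / INR (S j)) / (eps + r))).
    { intros j. rewrite Hmoment. field. split; [exact Hu|apply not_0_INR; lia]. }
    replace (Finite (1 / (eps + r))) with (Finite ((1 - 0) / (eps + r)))
      by (rewrite Rminus_0_r; reflexivity).
    apply is_lim_seq_div'; [|apply is_lim_seq_const|exact Hu].
    apply is_lim_seq_minus'; [apply is_lim_seq_const|].
    apply is_lim_seq_rising_ratio_div_succ; assumption.
Qed.
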